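(* Let $\Gamma=(V,E)$ be a graph, for each $v\in V$ let $C_v$ be a right cancellative monoid, and let $C=\Gamma_{v\in V}C_v$. Let $c$ be a non-unit of $C_v$ and $d$ a non-unit of $C_u$, where $(u,v)\in E$. Then $Cc\cap Cd=Ccd$.
   Context: A graph $\Gamma=(V,E)$ has vertex set $V$ and irreflexive symmetric edge relation $E$. The graph product $\Gamma_{v\in V}C_v$ of pairwise disjoint monoids $C_v$ is the quotient of their free product by the congruence generated by all pairs $(mn,nm)$ with $m\in C_u$, $n\in C_v$, $(u,v)\in E$; each $C_v$ is identified with its image in $C$. *)

From Stdlib Require Import List.
Import ListNotations.

Definition is_monoid (M : Type) (op : M -> M -> M) (e : M) : Prop :=
  (forall a b c, op a (op b c) = op (op a b) c) /\
  (forall a, op e a = a) /\ (forall a, op a e = a).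

Definition right_cancellative (M : Type) (op : M -> M -> M) : Prop :=
  forall a b c, op a c = op b c -> a = b.

Definition is_unit (M : Type) (op : M -> M -> M) (e : M) (a : M) : Prop :=
  exists b, op a b = e /\ op b a = e.

Definition is_graph (V : Type) (E : V -> V -> Prop) : Prop :=
  (forall v, ~ E v v) /\ (forall u v, E u v -> E v u).

Section GraphProduct.
Variables (V : Type) (E : V -> V -> Prop) (C : V -> Type)
  (mul : forall v, C v -> C v -> C v) (one : forall v, C v).

Definition letter := { v : V & C v }.
Definition word := list letter.

(* Defining relations of the graph product, presented as a quotient of the
   free monoid on the letters: the first two give the free product of the
   C_v (unit of C_v is the empty word, products inside C_v are merged), the
   third gives the commutation relations mn = nm for m in C_u, n in C_v,
   (u,v) in E. *)
Inductive gp_rel : word -> word -> Prop :=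
  | gp_one v : gp_rel [existT _ v (one v)] []
  | gp_mul v a b : gp_rel [existT _ v a; existT _ v b] [existT _ v (mul v a b)]
  | gp_comm u v (m : C u) (n : C v) : E u v ->
      gp_rel [existT _ u m; existT _ v n] [existT _ v n; existT _ u m].

Inductive gp_eq : word -> word -> Prop :=
  | gp_step s l r t : gp_rel l r -> gp_eq (s ++ l ++ t) (s ++ r ++ t)
  | gp_refl w : gp_eq w w
  | gp_sym w1 w2 : gp_eq w1 w2 -> gp_eq w2 w1
  | gp_trans w1 w2 w3 : gp_eq w1 w2 -> gp_eq w2 w3 -> gp_eq w1 w3.

End GraphProduct.

From Stdlib Require Import List Setoid Morphisms Classical ClassicalEpsilon Eqdep.
Import ListNotations.

(* Letters act on words from the right: [push r x m] multiplies m into the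
   last x-syllable of r that is visible from the right end (all later letters
   commute with x), deletes it if the product is 1, and appends m otherwise.
   Folding [push] over w yields a word equivalent to w.  Rather than proving
   that this is a normal form, we show that its projections onto the pairs
   {p, q} of non-adjacent vertices (p = q allowed) only depend on the class
   of w; these projections determine the last visible x-syllable together
   with its value.  Hence if w = z c in C, the reduced form of w has a last
   visible v-syllable s c, which is not 1 because C_v is right cancellative
   and c is a non-unit; likewise it has a last visible u-syllable s' d.
   Since u and v are adjacent, both syllables move to the end, and
   w = z' (s c) (s' d) = z' s s' c d. *)

Local Arguments gp_step {V E C mul one} s l r t.
Local Arguments gp_one {V E C mul one} v.
Local Arguments gp_mul {V E C mul one} v a b.
Local Arguments gp_comm {V E C mul one} u v m n.

Definition decide (P : Prop) : bool :=
  if excluded_middle_informative P then true else false.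

Lemma decide_true (P : Prop) : decide P = true -> P.
Proof. unfold decide; destruct excluded_middle_informative; congruence. Qed.

Lemma decide_eq_true (P : Prop) : P -> decide P = true.
Proof. unfold decide; destruct excluded_middle_informative; tauto. Qed.

Lemma decide_ext (P Q : Prop) : (P <-> Q) -> decide P = decide Q.
Proof. intro H; unfold decide; do 2 destruct excluded_middle_informative; tauto. Qed.

Lemma filter_nil_all {A} (f : A -> bool) l :
  (forall a, In a l -> f a = false) -> filter f l = [].
Proof. induction l as [|a l IH]; simpl; intros H; auto. rewrite H by auto. auto. Qed.

Lemma filter_nil_notin {A} (f : A -> bool) l a : filter f l = [] -> In a l -> f a = false.
Proof.
  intros Hl Ha. destruct (f a) eqn:Hfa; [|reflexivity].
  assert (Hin : In a (filter f l)) by (apply filter_In; auto).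
  rewrite Hl in Hin. contradiction.
Qed.

Lemma filter_snoc_split {A} (f : A -> bool) w l a : filter f w = l ++ [a] ->
  exists w1 w2, w = w1 ++ a :: w2 /\ filter f w1 = l /\ filter f w2 = [].
Proof.
  revert l a; induction w as [|x w IH] using rev_ind; intros l a H.
  - destruct l; discriminate.
  - rewrite filter_app in H; simpl in H. destruct (f x) eqn:Hx.
    + apply app_inj_tail in H as [<- <-]. exists w, []. auto.
    + rewrite app_nil_r in H. destruct (IH _ _ H) as (w1 & w2 & -> & H1 & H2).
      exists w1, (w2 ++ [x]). rewrite <- app_assoc, filter_app, H2; simpl; rewrite Hx. auto.
Qed.

Lemma app_cons_last_unique {A} (P : A -> Prop) a b c d (x y : A) :
  a ++ x :: b = c ++ y :: d -> P x -> P y ->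
  Forall (fun z => ~ P z) b -> Forall (fun z => ~ P z) d -> a = c /\ x = y /\ b = d.
Proof.
  revert c; induction a as [|a0 a IH]; intros c H Px Py Hb Hd; destruct c as [|c0 c];
    simpl in H; injection H as H1 H2; subst.
  - auto.
  - exfalso. apply (Forall_elt _ _ _ Hb Py).
  - exfalso. apply (Forall_elt _ _ _ Hd Px).
  - destruct (IH c H2) as (-> & -> & ->); auto.
Qed.

Lemma app_cons_eq_cases {A} (a b c d : list A) (x y : A) : a ++ x :: b = c ++ y :: d -> x <> y ->
  (exists k, a = c ++ y :: k /\ d = k ++ x :: b) \/ (exists k, c = a ++ x :: k /\ b = k ++ y :: d).
Proof.
  intros H Hxy. destruct (app_eq_app _ _ _ _ H) as [[|z k] [[H1 H2]|[H1 H2]]];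
    simpl in H2; injection H2 as H2 H3; subst; rewrite ?app_nil_r in *; try congruence; eauto.
Qed.

Section GraphProduct.

Variables (V : Type) (E : V -> V -> Prop) (C : V -> Type)
  (mul : forall v, C v -> C v -> C v) (one : forall v, C v).
Hypothesis HE : is_graph V E.
Hypothesis Hmon : forall v, is_monoid (C v) (mul v) (one v).
Hypothesis Hrc : forall v, right_cancellative (C v) (mul v).

Notation W := (word V C).
Notation geq := (gp_eq V E C mul one).

Lemma E_irrefl x : ~ E x x. Proof. apply HE. Qed.
Lemma E_sym x y : E x y -> E y x. Proof. apply HE. Qed.
Lemma mulA v a b c : mul v a (mul v b c) = mul v (mul v a b) c. Proof. apply Hmon. Qed.
Lemma mul1l v a : mul v (one v) a = a. Proof. apply Hmon. Qed.
Lemma mul1r v a : mul v a (one v) = a. Proof. apply Hmon. Qed.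

(* [t c = 1] gives [c t c = c = 1 c], so [c t = 1] by right cancellation. *)
Lemma nonunit_mul_neq1 v (t c : C v) :
  ~ is_unit (C v) (mul v) (one v) c -> mul v t c <> one v.
Proof.
  intros Hc Htc. apply Hc. exists t; split; [|exact Htc].
  apply (Hrc v _ _ c). rewrite <- mulA, Htc, mul1r, mul1l. reflexivity.
Qed.

#[local] Instance gp_eq_Equivalence : Equivalence geq.
Proof. split; [exact (gp_refl _ _ _ _ _) | exact (gp_sym _ _ _ _ _) | exact (gp_trans _ _ _ _ _)]. Qed.

Lemma gp_eq_app_l s a b : geq a b -> geq (s ++ a) (s ++ b).
Proof.
  induction 1 as [s0 l r t Hlr| | |]; try (econstructor; eassumption).
  rewrite (app_assoc s s0 (l ++ t)), (app_assoc s s0 (r ++ t)). exact (gp_step _ _ _ _ Hlr).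
Qed.

Lemma gp_eq_app_r t a b : geq a b -> geq (a ++ t) (b ++ t).
Proof.
  induction 1 as [s l r t0 Hlr| | |]; try (econstructor; eassumption).
  rewrite <- !app_assoc. exact (gp_step _ _ _ _ Hlr).
Qed.

#[local] Instance app_gp_eq_Proper : Proper (geq ==> geq ==> geq) (@app (letter V C)).
Proof. intros a a' Ha b b' Hb. transitivity (a' ++ b); [apply gp_eq_app_r | apply gp_eq_app_l]; assumption. Qed.

Definition adj x (L : letter V C) : Prop := E (projT1 L) x.

Lemma gp_eq_commute x m r : Forall (adj x) r ->
  geq (r ++ [existT C x m]) (existT C x m :: r).
Proof.
  induction r as [|[y n] r IH]; intros Hr; simpl; [reflexivity|].
  inversion_clear Hr as [|? ? Hy Hr'].
  transitivity (existT C y n :: existT C x m :: r).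
  - exact (gp_eq_app_l [existT C y n] _ _ (IH Hr')).
  - exact (gp_step [] _ _ r (gp_comm y x n m Hy)).
Qed.

(* (x, t) is the last x-syllable of r that can be moved to the right end. *)
Definition is_tail x (r : W) r1 (t : C x) r2 : Prop :=
  r = r1 ++ existT C x t :: r2 /\ Forall (adj x) r2.

Definition has_no_tail x (r : W) : Prop := forall r1 t r2, ~ is_tail x r r1 t r2.

Lemma tail_dec x r : (exists r1 t r2, is_tail x r r1 t r2) \/ has_no_tail x r.
Proof.
  destruct (classic (exists r1 t r2, is_tail x r r1 t r2)) as [H|H]; [now left|right].
  intros r1 t r2 HT. eauto.
Qed.

Lemma gp_eq_tail_to_end x r r1 t r2 : is_tail x r r1 t r2 ->
  geq r ((r1 ++ r2) ++ [existT C x t]).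
Proof. intros [-> Hr2]. now rewrite <- app_assoc, gp_eq_commute. Qed.

Lemma adj_neq x l : Forall (adj x) l -> Forall (fun L : letter V C => ~ projT1 L = x) l.
Proof. apply Forall_impl. intros L HL Hx. unfold adj in HL. rewrite Hx in HL. exact (E_irrefl _ HL). Qed.

Lemma tail_unique x r r1 t r2 s1 t' s2 : is_tail x r r1 t r2 -> is_tail x r s1 t' s2 ->
  r1 = s1 /\ t = t' /\ r2 = s2.
Proof.
  intros [-> H2] [H3 H4].
  destruct (app_cons_last_unique (fun L : letter V C => projT1 L = x) _ _ _ _ _ _ H3)
    as (? & Ht & ?); auto using adj_neq.
  apply inj_pair2 in Ht. auto.
Qed.

Definition opt_letter x (s : C x) : W :=
  if excluded_middle_informative (s = one x) then [] else [existT C x s].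

Lemma opt_letter_one x s : s = one x -> opt_letter x s = [].
Proof. unfold opt_letter; destruct excluded_middle_informative; tauto. Qed.

Lemma opt_letter_neq1 x s : s <> one x -> opt_letter x s = [existT C x s].
Proof. unfold opt_letter; destruct excluded_middle_informative; tauto. Qed.

Lemma gp_eq_opt_letter x s : geq [existT C x s] (opt_letter x s).
Proof.
  destruct (classic (s = one x)) as [-> | Hs].
  - rewrite opt_letter_one by reflexivity. exact (gp_step [] _ _ [] (gp_one x)).
  - now rewrite opt_letter_neq1.
Qed.

Definition push (r : W) x (m : C x) : W :=
  match excluded_middle_informative
          (exists p : W * C x * W, is_tail x r (fst (fst p)) (snd (fst p)) (snd p)) with
  | left H =>
      let '(r1, t, r2) := proj1_sig (constructive_indefinite_description _ H) in
      r1 ++ opt_letter x (mul x t m) ++ r2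
  | right _ => r ++ opt_letter x m
  end.

Lemma push_tail x r r1 t r2 m : is_tail x r r1 t r2 ->
  push r x m = r1 ++ opt_letter x (mul x t m) ++ r2.
Proof.
  intro HT. unfold push. destruct excluded_middle_informative as [H|H].
  - destruct (constructive_indefinite_description _ H) as [[[s1 t'] s2] Hs]; simpl in *.
    now destruct (tail_unique _ _ _ _ _ _ _ _ HT Hs) as (-> & -> & ->).
  - exfalso. apply H. exists (r1, t, r2). exact HT.
Qed.

Lemma push_no_tail x r m : has_no_tail x r -> push r x m = r ++ opt_letter x m.
Proof.
  intro HT. unfold push. destruct excluded_middle_informative as [[[[r1 t] r2] H]|]; auto.
  exfalso. exact (HT _ _ _ H).
Qed.

Lemma gp_eq_push r x m : geq (r ++ [existT C x m]) (push r x m).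
Proof.
  destruct (tail_dec x r) as [(r1 & t & r2 & HT) | HT].
  - rewrite (push_tail _ _ _ _ _ m HT). destruct HT as [-> Hr2].
    transitivity (r1 ++ [existT C x t; existT C x m] ++ r2).
    + rewrite <- app_assoc. apply gp_eq_app_l, (gp_eq_app_l [existT C x t]), gp_eq_commute, Hr2.
    + rewrite <- gp_eq_opt_letter. exact (gp_step _ _ _ _ (gp_mul x t m)).
  - rewrite push_no_tail by exact HT. apply gp_eq_app_l, gp_eq_opt_letter.
Qed.

Definition push_word (rho w : W) : W :=
  fold_left (fun acc (L : letter V C) => push acc (projT1 L) (projT2 L)) w rho.

Lemma push_word_app rho a b : push_word rho (a ++ b) = push_word (push_word rho a) b.
Proof. apply fold_left_app. Qed.

Lemma gp_eq_push_word rho w : geq (rho ++ w) (push_word rho w).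
Proof.
  revert rho; induction w as [|[x m] w IH]; intros rho; simpl.
  - now rewrite app_nil_r.
  - transitivity ((rho ++ [existT C x m]) ++ w).
    + now rewrite <- app_assoc.
    + rewrite gp_eq_push. apply IH.
Qed.

(* A word is reduced when no letter is 1 and no two letters of the same type x
   are separated only by letters commuting with x. *)
Definition no_tail_type x (s : list V) : Prop :=
  forall s1 s2, s = s1 ++ x :: s2 -> ~ Forall (fun z => E z x) s2.

Inductive reduced_types : list V -> Prop :=
  | reduced_types_nil : reduced_types []
  | reduced_types_snoc s x : reduced_types s -> no_tail_type x s -> reduced_types (s ++ [x]).

Lemma reduced_types_snoc_inv s x : reduced_types (s ++ [x]) -> reduced_types s /\ no_tail_type x s.
Proof.
  intro H. inversion H as [Hs | s' x' Hs' Hx Heq].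
  - destruct s; discriminate.
  - apply app_inj_tail in Heq as [-> ->]. auto.
Qed.

Lemma reduced_types_prefix s t : reduced_types (s ++ t) -> reduced_types s.
Proof.
  revert s; induction t as [|x t IH] using rev_ind; intros s H.
  - now rewrite app_nil_r in H.
  - rewrite app_assoc in H. apply IH, (reduced_types_snoc_inv _ _ H).
Qed.

Lemma reduced_types_no_repeat a b c x :
  reduced_types (a ++ x :: b ++ x :: c) -> ~ Forall (fun z => E z x) b.
Proof.
  intros H. replace (a ++ x :: b ++ x :: c) with (((a ++ x :: b) ++ [x]) ++ c) in H
    by (rewrite <- !app_assoc; reflexivity).
  apply reduced_types_prefix, reduced_types_snoc_inv in H as [_ H]. exact (H a b eq_refl).
Qed.

Lemma reduced_types_remove s1 s2 x : Forall (fun z => E z x) s2 ->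
  reduced_types (s1 ++ x :: s2) -> reduced_types (s1 ++ s2).
Proof.
  revert s1; induction s2 as [|y s2 IH] using rev_ind; intros s1 Hs2 H.
  - rewrite app_nil_r. exact (reduced_types_prefix s1 [x] H).
  - apply Forall_app in Hs2 as [Hs2 Hy]. inversion_clear Hy as [|? ? Hyx _].
    rewrite app_comm_cons, app_assoc in H. apply reduced_types_snoc_inv in H as [H Hn].
    rewrite app_assoc. constructor; [exact (IH _ Hs2 H)|].
    intros t1 t2 Heq Ht2. destruct (app_eq_app _ _ _ _ Heq) as [[|z l] [[H1 H2]|[H1 H2]]];
      simpl in H2; try injection H2 as <- H2; subst.
    + apply (Hn (t1 ++ [x]) t2); [now rewrite app_nil_r, <- app_assoc | exact Ht2].
    + apply (Hn (s1 ++ [x]) t2); [now rewrite <- app_assoc | exact Ht2].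
    + apply (Hn t1 (l ++ x :: s2)); [now rewrite <- app_assoc|].
      apply Forall_app in Ht2 as [Hl Hs]. apply Forall_app; split; [exact Hl|].
      constructor; [apply E_sym, Hyx | exact Hs].
    + apply (Hn (s1 ++ x :: z :: l) t2); [now rewrite <- app_assoc | exact Ht2].
Qed.

Definition reduced (r : W) : Prop :=
  reduced_types (map (@projT1 _ _) r) /\ Forall (fun L : letter V C => projT2 L <> one (projT1 L)) r.

Lemma reduced_nil : reduced [].
Proof. split; constructor. Qed.

Lemma no_tail_type_map x r : has_no_tail x r -> no_tail_type x (map (@projT1 _ _) r).
Proof.
  intros H s1 s2 Heq Hs2. destruct (map_eq_app _ _ _ _ Heq) as (l1 & l2 & -> & _ & Hl2).
  destruct (map_eq_cons _ _ Hl2) as ([y t] & l2' & -> & Hy & <-); simpl in Hy; subst y.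
  apply (H l1 t l2'). split; [reflexivity|]. apply Forall_map in Hs2. exact Hs2.
Qed.

Lemma reduced_push r x m : reduced r -> reduced (push r x m).
Proof.
  intros [Hty Hne]. destruct (tail_dec x r) as [(r1 & t & r2 & HT) | HT].
  - rewrite (push_tail _ _ _ _ _ m HT). destruct HT as [-> Hr2].
    rewrite map_app in Hty. apply Forall_app in Hne as [Hne1 Hne2]. inversion_clear Hne2.
    destruct (classic (mul x t m = one x)) as [Htm | Htm].
    + rewrite opt_letter_one by exact Htm. split; [|now apply Forall_app].
      rewrite map_app. apply (reduced_types_remove _ _ x); [apply Forall_map, Hr2 | exact Hty].
    + rewrite opt_letter_neq1 by exact Htm. split; [now rewrite map_app|].
      apply Forall_app; split; [exact Hne1 | now constructor].
  - rewrite push_no_tail by exact HT.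
    destruct (classic (m = one x)) as [Hm | Hm].
    + rewrite opt_letter_one, app_nil_r by exact Hm. now split.
    + rewrite opt_letter_neq1 by exact Hm. split.
      * rewrite map_app. constructor; [exact Hty | apply no_tail_type_map, HT].
      * apply Forall_app; split; [exact Hne | now constructor].
Qed.

Lemma reduced_push_word rho w : reduced rho -> reduced (push_word rho w).
Proof. revert rho; induction w; simpl; auto using reduced_push. Qed.

Lemma reduced_remove_tail rho x r1 t r2 : reduced rho -> is_tail x rho r1 t r2 ->
  has_no_tail x (r1 ++ r2).
Proof.
  intros [Hty _] [-> Hr2] s1 t' s2 [Heq Hs2].
  destruct (app_eq_app _ _ _ _ Heq) as [[|L l] [[H1 H2]|[H1 H2]]];
    simpl in H2; try injection H2 as <- H2; subst.
  - inversion_clear Hr2 as [|? ? Hx _]. exact (E_irrefl _ Hx).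
  - inversion_clear Hr2 as [|? ? Hx _]. exact (E_irrefl _ Hx).
  - apply Forall_app in Hs2 as [Hl _].
    rewrite !map_app in Hty; simpl in Hty. rewrite <- app_assoc in Hty; simpl in Hty.
    apply (reduced_types_no_repeat _ _ _ _ Hty), Forall_map, Hl.
  - exact (E_irrefl x (Forall_elt _ (_ :: _) _ Hr2)).
Qed.

Definition proj p q (w : W) : W :=
  filter (fun L : letter V C => decide (projT1 L = p \/ projT1 L = q)) w.

Lemma proj_app p q a b : proj p q (a ++ b) = proj p q a ++ proj p q b.
Proof. apply filter_app. Qed.

Lemma proj_cons_in p q x t l : x = p \/ x = q ->
  proj p q (existT C x t :: l) = existT C x t :: proj p q l.
Proof. intro H. unfold proj; simpl. now rewrite (decide_eq_true _ H). Qed.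

Lemma proj_cons_out p q x t l : ~ (x = p \/ x = q) -> proj p q (existT C x t :: l) = proj p q l.
Proof.
  intro H. unfold proj; simpl. destruct (decide (x = p \/ x = q)) eqn:Hd; [|reflexivity].
  exfalso. exact (H (decide_true _ Hd)).
Qed.

Lemma proj_opt_letter_out p q x s : ~ (x = p \/ x = q) -> proj p q (opt_letter x s) = [].
Proof.
  intro H. unfold opt_letter; destruct excluded_middle_informative; [reflexivity|].
  now rewrite proj_cons_out.
Qed.

Lemma proj_sym p q l : proj p q l = proj q p l.
Proof. apply filter_ext. intro; apply decide_ext; tauto. Qed.

Lemma proj_nil_notin p q l L : proj p q l = [] -> In L l -> ~ (projT1 L = p \/ projT1 L = q).
Proof.
  intros Hl HL Hpq. apply (filter_nil_notin _ _ _ Hl) in HL. now rewrite decide_eq_true in HL.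
Qed.

Lemma proj_nil_Forall p q l : proj p q l = [] -> Forall (fun L : letter V C => ~ projT1 L = p) l.
Proof. intro Hl. apply Forall_forall. intros L HL Hp. apply (proj_nil_notin _ _ _ _ Hl HL); auto. Qed.

Lemma proj_adj_nil p q x l : ~ E p q -> x = p \/ x = q -> Forall (adj x) l -> proj p q l = [].
Proof.
  intros Hpq Hx Hl. apply filter_nil_all. intros [z s] Hin.
  apply (proj1 (Forall_forall _ _) Hl) in Hin. unfold adj in Hin; simpl in Hin.
  simpl. destruct (decide (z = p \/ z = q)) eqn:Hd; [exfalso|reflexivity]. apply decide_true in Hd.
  destruct Hx as [<- | <-], Hd as [<- | <-];
    first [exact (E_irrefl _ Hin) | exact (Hpq Hin) | exact (Hpq (E_sym _ _ Hin))].
Qed.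

Lemma proj_tail p q x r r1 t r2 : ~ E p q -> x = p \/ x = q -> is_tail x r r1 t r2 ->
  proj p q r = proj p q r1 ++ [existT C x t].
Proof.
  intros Hpq Hx [-> Hr2]. rewrite proj_app, proj_cons_in, (proj_adj_nil p q x r2); auto.
Qed.

Definition proj_equiv (r r' : W) : Prop := forall p q, ~ E p q -> proj p q r = proj p q r'.

#[local] Instance proj_equiv_Equivalence : Equivalence proj_equiv.
Proof.
  split; unfold proj_equiv.
  - intros a p q _. reflexivity.
  - intros a b H p q Hpq. symmetry. auto.
  - intros a b c H1 H2 p q Hpq. rewrite H1; auto.
Qed.

Definition proj_equiv_at x (r r' : W) : Prop := forall z, ~ E x z -> proj x z r = proj x z r'.

Lemma tail_transfer x r r' r1 t r2 : is_tail x r r1 t r2 -> proj_equiv_at x r r' ->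
  exists r1' r2', is_tail x r' r1' t r2'.
Proof.
  intros HT Hr.
  assert (Hproj : forall z, ~ E x z -> proj x z r' = proj x z r1 ++ [existT C x t]).
  { intros z Hz. rewrite <- (Hr z Hz). exact (proj_tail x z x r r1 t r2 Hz (or_introl eq_refl) HT). }
  destruct (filter_snoc_split _ _ _ _ (Hproj x (E_irrefl x))) as (r1' & r2' & Hr' & _ & Hr2').
  exists r1', r2'. split; [exact Hr'|].
  apply Forall_forall. intros [z s] Hin. unfold adj; simpl.
  destruct (classic (E z x)) as [Hzx | Hzx]; [exact Hzx | exfalso].
  assert (Hxz : ~ E x z) by (intro H; exact (Hzx (E_sym _ _ H))).
  (* the last letter of type x or z in r' is (x, t), so z cannot occur in r2' *)
  destruct (filter_snoc_split _ _ _ _ (Hproj z Hxz)) as (a & b & Hab & _ & Hb).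
  rewrite Hr' in Hab.
  destruct (app_cons_last_unique (fun L : letter V C => projT1 L = x) _ _ _ _ _ _ Hab
              eq_refl eq_refl (proj_nil_Forall _ _ _ Hr2') (proj_nil_Forall _ _ _ Hb))
    as (_ & _ & ->). apply (proj_nil_notin _ _ _ _ Hb Hin). now right.
Qed.

Lemma proj_push_out p q x r m : ~ (x = p \/ x = q) -> proj p q (push r x m) = proj p q r.
Proof.
  intro Hx. destruct (tail_dec x r) as [(r1 & t & r2 & HT) | HT].
  - rewrite (push_tail _ _ _ _ _ m HT). destruct HT as [-> _].
    rewrite !proj_app, proj_opt_letter_out, proj_cons_out; auto.
  - rewrite push_no_tail, proj_app, proj_opt_letter_out, app_nil_r; auto.
Qed.

Lemma proj_push_in p q x r r' m : ~ E p q -> x = p \/ x = q -> proj_equiv_at x r r' ->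
  proj p q (push r x m) = proj p q (push r' x m).
Proof.
  intros Hpq Hx Hr.
  assert (Hrr' : proj p q r = proj p q r').
  { destruct Hx as [<- | <-]; [now apply Hr|].
    rewrite !(proj_sym p x). apply Hr. intro H. exact (Hpq (E_sym _ _ H)). }
  destruct (tail_dec x r) as [(r1 & t & r2 & HT) | HT].
  - destruct (tail_transfer _ _ _ _ _ _ HT Hr) as (r1' & r2' & HT').
    rewrite (push_tail _ _ _ _ _ m HT), (push_tail _ _ _ _ _ m HT').
    rewrite (proj_tail p q x _ _ _ _ Hpq Hx HT), (proj_tail p q x _ _ _ _ Hpq Hx HT') in Hrr'.
    apply app_inj_tail in Hrr' as [H1 _]. destruct HT as [_ H2], HT' as [_ H2'].
    rewrite !proj_app, H1, (proj_adj_nil p q x r2), (proj_adj_nil p q x r2'); auto.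
  - assert (HT' : has_no_tail x r').
    { intros r1 t r2 H. destruct (tail_transfer x r' r r1 t r2 H) as (? & ? & ?).
      - intros z Hz. symmetry. apply Hr, Hz.
      - eapply HT; eassumption. }
    rewrite !push_no_tail, !proj_app, Hrr' by assumption. reflexivity.
Qed.

Lemma proj_equiv_push r r' x m : proj_equiv r r' -> proj_equiv (push r x m) (push r' x m).
Proof.
  intros H p q Hpq. destruct (classic (x = p \/ x = q)) as [Hx | Hx].
  - apply proj_push_in; auto. intros z Hz. apply H, Hz.
  - rewrite !proj_push_out; auto.
Qed.

Lemma proj_equiv_push_word rho rho' w : proj_equiv rho rho' ->
  proj_equiv (push_word rho w) (push_word rho' w).
Proof. revert rho rho'; induction w; simpl; auto using proj_equiv_push. Qed.

Lemma proj_equiv_move x b r1 r2 : Forall (adj x) r2 ->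
  proj_equiv ((r1 ++ r2) ++ opt_letter x b) (r1 ++ opt_letter x b ++ r2).
Proof.
  intros Hr2 p q Hpq. rewrite !proj_app. destruct (classic (x = p \/ x = q)).
  - rewrite (proj_adj_nil p q x r2), !app_nil_r; auto.
  - rewrite proj_opt_letter_out, !app_nil_r; auto.
Qed.

Lemma push_one rho x : reduced rho -> push rho x (one x) = rho.
Proof.
  intros [_ Hne]. destruct (tail_dec x rho) as [(r1 & t & r2 & HT) | HT].
  - rewrite (push_tail _ _ _ _ _ _ HT), mul1r. destruct HT as [-> _].
    rewrite opt_letter_neq1; [reflexivity|]. exact (Forall_elt _ _ _ Hne).
  - rewrite push_no_tail, opt_letter_one, app_nil_r; auto.
Qed.

Lemma push_mul rho x a b : reduced rho ->
  proj_equiv (push (push rho x a) x b) (push rho x (mul x a b)).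
Proof.
  intros Hrho. destruct (tail_dec x rho) as [(r1 & t & r2 & HT) | HT].
  - rewrite (push_tail _ _ _ _ _ a HT), (push_tail _ _ _ _ _ (mul x a b) HT), mulA.
    destruct (classic (mul x t a = one x)) as [Hta | Hta].
    + rewrite opt_letter_one, Hta, mul1l by exact Hta. simpl.
      rewrite push_no_tail by exact (reduced_remove_tail _ _ _ _ _ Hrho HT).
      apply proj_equiv_move, HT.
    + rewrite opt_letter_neq1 by exact Hta. simpl.
      rewrite (push_tail x _ r1 (mul x t a) r2); [reflexivity | split; [reflexivity | apply HT]].
  - rewrite !(push_no_tail x rho) by exact HT.
    destruct (classic (a = one x)) as [-> | Ha].
    + rewrite opt_letter_one, app_nil_r, mul1l, push_no_tail by auto. reflexivity.
    + rewrite opt_letter_neq1 by exact Ha. rewrite (push_tail x _ rho a []).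
      * now rewrite app_nil_r.
      * split; [reflexivity | constructor].
Qed.

Lemma proj_equiv_at_push_adj x y rho n : E x y -> proj_equiv_at x rho (push rho y n).
Proof.
  intros Hxy z Hz. symmetry. apply proj_push_out.
  intros [<- | <-]; [exact (E_irrefl _ Hxy) | exact (Hz Hxy)].
Qed.

Lemma push_comm rho x y m n : E x y ->
  proj_equiv (push (push rho x m) y n) (push (push rho y n) x m).
Proof.
  intros Hxy p q Hpq.
  destruct (classic (x = p \/ x = q)) as [Hx | Hx], (classic (y = p \/ y = q)) as [Hy | Hy].
  - exfalso. destruct Hx as [<- | <-], Hy as [<- | <-];
      first [exact (E_irrefl _ Hxy) | exact (Hpq Hxy) | exact (Hpq (E_sym _ _ Hxy))].
  - rewrite proj_push_out by exact Hy.
    apply proj_push_in; auto using proj_equiv_at_push_adj.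
  - rewrite (proj_push_out p q x) by exact Hx. symmetry.
    apply proj_push_in; auto using proj_equiv_at_push_adj, E_sym.
  - rewrite !proj_push_out; auto.
Qed.

Lemma proj_equiv_push_word_rel rho l r : reduced rho -> gp_rel V E C mul one l r ->
  proj_equiv (push_word rho l) (push_word rho r).
Proof.
  intros Hrho []; simpl.
  - now rewrite push_one.
  - apply push_mul, Hrho.
  - apply push_comm; assumption.
Qed.

Lemma proj_equiv_of_gp_eq w1 w2 : geq w1 w2 -> proj_equiv (push_word [] w1) (push_word [] w2).
Proof.
  induction 1 as [s l r t Hlr| | |].
  - rewrite !push_word_app. apply proj_equiv_push_word, proj_equiv_push_word_rel;
      [apply reduced_push_word, reduced_nil | exact Hlr].
  - reflexivity.
  - symmetry; assumption.
  - etransitivity; eassumption.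
Qed.

Lemma push_nonunit_tail r v c : ~ is_unit (C v) (mul v) (one v) c ->
  exists r1 r2 s, is_tail v (push r v c) r1 (mul v s c) r2.
Proof.
  intros Hc. destruct (tail_dec v r) as [(r1 & t & r2 & HT) | HT].
  - rewrite (push_tail _ _ _ _ _ _ HT), opt_letter_neq1 by (apply nonunit_mul_neq1, Hc).
    exists r1, r2, t. split; [reflexivity | apply HT].
  - assert (Hc1 : c <> one v) by (rewrite <- (mul1l v c); apply nonunit_mul_neq1, Hc).
    rewrite push_no_tail, opt_letter_neq1 by assumption.
    exists r, [], (one v). rewrite mul1l. split; [reflexivity | constructor].
Qed.

Lemma tail_of_right_divisor w z v c : ~ is_unit (C v) (mul v) (one v) c ->
  geq w (z ++ [existT C v c]) -> exists r1 r2 s, is_tail v (push_word [] w) r1 (mul v s c) r2.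
Proof.
  intros Hc Hw. apply proj_equiv_of_gp_eq in Hw. rewrite push_word_app in Hw.
  destruct (push_nonunit_tail (push_word [] z) v c Hc) as (r1 & r2 & s & HT).
  destruct (tail_transfer _ _ _ _ _ _ HT (fun q Hq => eq_sym (Hw v q Hq))) as (r1' & r2' & HT').
  eauto.
Qed.

Lemma tail_remove_other x y r r1 t r2 q1 t' q2 : x <> y ->
  is_tail x r r1 t r2 -> is_tail y r q1 t' q2 -> exists a b, is_tail x (q1 ++ q2) a t b.
Proof.
  intros Hxy [Hr Hr2] [Hq _]. rewrite Hq in Hr.
  assert (Hne : existT C y t' <> existT C x t) by (intro H; apply Hxy; exact (eq_sym (f_equal (@projT1 _ _) H))).
  destruct (app_cons_eq_cases _ _ _ _ _ _ Hr Hne) as [(k & -> & ->) | (k & -> & ->)].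
  - exists r1, (k ++ q2). split; [now rewrite <- app_assoc|].
    apply Forall_app in Hr2 as [Hk Hq2]. inversion_clear Hq2. now apply Forall_app.
  - exists (q1 ++ k), r2. split; [now rewrite <- app_assoc | exact Hr2].
Qed.

Lemma gp_eq_mul_pair u v (Huv : E u v) (s c : C v) (s' d : C u) :
  geq [existT C v (mul v s c); existT C u (mul u s' d)]
      [existT C v s; existT C u s'; existT C v c; existT C u d].
Proof.
  transitivity [existT C v s; existT C v c; existT C u (mul u s' d)].
  { symmetry. exact (gp_step [] _ _ _ (gp_mul v s c)). }
  transitivity [existT C v s; existT C v c; existT C u s'; existT C u d].
  { symmetry. exact (gp_step [_; _] _ _ [] (gp_mul u s' d)). }
  exact (gp_step [_] _ _ [_] (gp_comm v u c s' (E_sym _ _ Huv))).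
Qed.

Lemma right_divisible_both u v (Huv : E u v) c d :
  ~ is_unit (C v) (mul v) (one v) c -> ~ is_unit (C u) (mul u) (one u) d ->
  forall w x y, geq w (x ++ [existT C v c]) -> geq w (y ++ [existT C u d]) ->
  exists z, geq w (z ++ [existT C v c; existT C u d]).
Proof.
  intros Hc Hd w x y Hx Hy.
  destruct (tail_of_right_divisor _ _ _ _ Hc Hx) as (r1 & r2 & s & Hv).
  destruct (tail_of_right_divisor _ _ _ _ Hd Hy) as (q1 & q2 & s' & Hu).
  assert (Hvu : v <> u) by (intros ->; exact (E_irrefl _ Huv)).
  destruct (tail_remove_other _ _ _ _ _ _ _ _ _ Hvu Hv Hu) as (a & b & Hv').
  exists ((a ++ b) ++ [existT C v s; existT C u s']).
  rewrite (gp_eq_push_word [] w), (gp_eq_tail_to_end _ _ _ _ _ Hu), (gp_eq_tail_to_end _ _ _ _ _ Hv').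
  rewrite <- !app_assoc. do 2 apply gp_eq_app_l. exact (gp_eq_mul_pair _ _ Huv _ _ _ _).
Qed.

Lemma right_divisible_of_product u v (Huv : E u v) (c : C v) (d : C u) w z :
  geq w (z ++ [existT C v c; existT C u d]) ->
  (exists x, geq w (x ++ [existT C v c])) /\ (exists y, geq w (y ++ [existT C u d])).
Proof.
  intros Hw. split.
  - exists (z ++ [existT C u d]). rewrite Hw, <- app_assoc.
    exact (gp_step z _ _ [] (gp_comm v u c d (E_sym _ _ Huv))).
  - exists (z ++ [existT C v c]). now rewrite Hw, <- app_assoc.
Qed.

End GraphProduct.

Theorem lemma2p5
  (V : Type) (E : V -> V -> Prop) (HE : is_graph V E)
  (C : V -> Type) (mul : forall v, C v -> C v -> C v) (one : forall v, C v)
  (Hmon : forall v, is_monoid (C v) (mul v) (one v))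
  (Hrc : forall v, right_cancellative (C v) (mul v))
  (u v : V) (Huv : E u v)
  (c : C v) (Hc : ~ is_unit (C v) (mul v) (one v) c)
  (d : C u) (Hd : ~ is_unit (C u) (mul u) (one u) d) :
  forall w : word V C,
    ((exists x, gp_eq V E C mul one w (x ++ [existT _ v c])) /\
     (exists y, gp_eq V E C mul one w (y ++ [existT _ u d])))
    <->
    (exists z, gp_eq V E C mul one w (z ++ [existT _ v c; existT _ u d])).
Proof.
  intro w. split.
  - intros [[x Hx] [y Hy]]. eapply right_divisible_both; eassumption.
  - intros [z Hz]. eapply right_divisible_of_product; eassumption.
Qed.
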